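(* Let $A$ be a finite alphabet and let $\mathbf{w},\mathbf{w}'$ be infinite LSP words over $A$ such that $\mathbf{w}=f(\mathbf{w}')$ for a bLSP morphism $f$ on $A$. Let $q$ be the state $({\rm alph}(\mathbf{w}),f,F(\mathbf{w}))$ and let $q'$ be a state $({\rm alph}(\mathbf{w}'),g,F(\mathbf{w}'))$ where $g$ is any bLSP morphism on $A$ such that $\mathbf{w}'=g(\mathbf{w}'')$ for some infinite word $\mathbf{w}''$, and where $F(\mathbf{x})$ denotes the set of all 5-tuples $(a,b,c,\beta,\gamma)$ such that $\mathbf{x}$ has an $(a,b,c,\beta,\gamma)$-fragility. Then $(q,f,q')$ is a transition of the automaton ${\cal A}_{\rm bLSP}$.
   Context: A finite word $u$ is a left special factor of a word $w$ if there are distinct letters $x\neq y$ with $xu$ and $yu$ factors of $w$. A word is LSP if every left special factor of it is a prefix of it. A bLSP morphism on $A$ is an endomorphism $f$ of $A^*$ such that there is a letter $\alpha$ with $f(\alpha)=\alpha$ and, for every letter $\beta\neq\alpha$, there is a letter $\gamma$ with $f(\beta)=f(\gamma)\beta$; this $\alpha$ is unique and denoted ${\rm first}(f)$. For pairwise distinct letters $a,b,c$ and distinct letters $\beta\neq\gamma$, a finite word $u$ is an $(a,b,c,\beta,\gamma)$-fragility of an infinite word $\mathbf{x}$ if $ua$ is a prefix of $\mathbf{x}$ and $\beta ub$, $\gamma uc$ are factors of $\mathbf{x}$; $\mathbf{x}$ is $(a,b,c)$-fragile if it has an $(a,b,c,\beta,\gamma)$-fragility for some $\beta\neq\gamma$.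 A morphism $f$ is LSP $(a,b,c)$-breaking if for every $(a,b,c)$-fragile infinite LSP word $\mathbf{x}$, $f(\mathbf{x})$ is not LSP. ${\rm Fact}(X)$ is the set of factors of words in $X$, ${\rm pref}(w)$ the set of prefixes of $w$, ${\rm alph}(w)$ the set of letters of $w$. The automaton ${\cal A}_{\rm bLSP}$: states are triples $q=({\rm alph}(q),{\rm bLSP}(q),{\rm set}(q))$ with ${\rm alph}(q)\subseteq A$, ${\rm bLSP}(q)$ a bLSP morphism on $A$, ${\rm set}(q)\subseteq A^5$; input letters are bLSP morphisms on $A$. A triple $(q,f,q')$ is a transition iff: (1) $f={\rm bLSP}(q)$; (2) ${\rm alph}(q)={\rm alph}(f({\rm alph}(q')))$; (3) for every $(a,b,c,\beta,\gamma)\in{\rm set}(q')$, $f$ is not LSP $(a,b,c)$-breaking; (4) ${\rm set}(q)$ is exactly the set of 5-tuples $(a,b,c,\beta,\gamma)$ of letters of ${\rm alph}(q)$ with $a,b,c$ pairwise distinct, $\beta\neq\gamma$, and such that either (a) $a={\rm first}(f)$ and $\beta b,\gamma c\in{\rm Fact}(f({\rm alph}(q')))$, or (b) there exist letters $a',b',c'$ with $(a',b',c',\beta,\gamma)\in{\rm set}(q')$ and a word $x$ with $xa\in{\rm pref}(f(a')\alpha)$, $xb\in{\rm pref}(f(b')\alpha)$, $xc\in{\rm pref}(f(c')\alpha)$, where $\alpha={\rm first}(f)$. *)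

(* finite alphabet = finType, finite words = seq A,
   infinite words = nat -> A, morphisms of A^* = A -> seq A. *)
From mathcomp Require Import all_boot.
Set Implicit Arguments. Unset Strict Implicit. Unset Printing Implicit Defensive.

Section Words.
Variable A : finType.

Definition infword := nat -> A.
Definition morph := A -> seq A.

Definition mimage (f : morph) (u : seq A) : seq A := flatten (map f u).

Definition ipref (u : seq A) (y : infword) : Prop := u = mkseq y (size u).

Definition ifactor (u : seq A) (y : infword) : Prop :=
  exists i, u = mkseq (fun j => y (i + j)) (size u).

(* y = f(x) for an infinite word x: every f-image of a prefix of x is a prefix of y *)
Definition iimage (f : morph) (x y : infword) : Prop :=
  forall n, ipref (mimage f (mkseq x n)) y.

Definition ialph (y : infword) : A -> Prop := fun a => exists n, y n = a.

Definition left_special (u : seq A) (y : infword) : Prop :=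
  exists x z : A, x <> z /\ ifactor (x :: u) y /\ ifactor (z :: u) y.

Definition LSP (y : infword) : Prop :=
  forall u, left_special u y -> ipref u y.

Definition is_first_b (f : morph) (al : A) : bool :=
  (f al == [:: al]) &&
  [forall be, (be != al) ==> [exists ga, f be == f ga ++ [:: be]]].

Definition is_bLSP (f : morph) : Prop := exists al, is_first_b f al.

(* first(f) (unique when f is bLSP); None if f is not bLSP *)
Definition first (f : morph) : option A := [pick al | is_first_b f al].

Definition fragility (a b c be ga : A) (u : seq A) (x : infword) : Prop :=
  [/\ a <> b, a <> c, b <> c & be <> ga] /\
  [/\ ipref (rcons u a) x, ifactor (be :: rcons u b) x & ifactor (ga :: rcons u c) x].

Definition fragile (a b c : A) (x : infword) : Prop :=
  exists be ga u, be <> ga /\ fragility a b c be ga u x.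

Definition Fset (x : infword) : A * A * A * A * A -> Prop :=
  fun t => let: (a, b, c, be, ga) := t in exists u, fragility a b c be ga u x.

Definition LSP_breaking (f : morph) (a b c : A) : Prop :=
  forall x y : infword, fragile a b c x -> LSP x -> iimage f x y -> ~ LSP y.

Record state := State {
  st_alph : A -> Prop;
  st_bLSP : morph;
  st_set  : A * A * A * A * A -> Prop }.

Definition is_state (q : state) : Prop := is_bLSP (st_bLSP q).

Definition transition (q : state) (f : morph) (q' : state) : Prop :=
  [/\ is_state q, is_state q' &
   [/\ f = st_bLSP q,
   (forall a, st_alph q a <-> exists d, st_alph q' d /\ a \in f d),
   (forall a b c be ga, st_set q' (a, b, c, be, ga) -> ~ LSP_breaking f a b c)
  & (forall a b c be ga, st_set q (a, b, c, be, ga) <->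
       [/\ [/\ st_alph q a, st_alph q b, st_alph q c, st_alph q be & st_alph q ga],
           [/\ a <> b, a <> c, b <> c & be <> ga] &
           (first f = Some a /\
              (exists d, st_alph q' d /\ infix [:: be; b] (f d)) /\
              (exists d, st_alph q' d /\ infix [:: ga; c] (f d)))
           \/
           (exists a' b' c', st_set q' (a', b', c', be, ga) /\
              exists al, first f = Some al /\
              exists x : seq A, [/\ prefix (rcons x a) (f a' ++ [:: al]),
                                    prefix (rcons x b) (f b' ++ [:: al]) &
                                    prefix (rcons x c) (f c' ++ [:: al])])])]].

End Words.

(* Let al = first f.  Every image f d is al followed by letters other than al, and ends
   with d.  Hence in w = f(w') the occurrences of al are exactly the positions where the
   blocks f (w' n) start, and the letter just before block n+1 is w' n.  A nonempty
   fragility u of w starts with al, so each of its three occurrences (as a prefix, after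
   be, after ga) starts at a block; cutting u at the occurrences of al parses it uniquely
   as f(u') followed by a proper beginning x of a block, the same u' and x for all three
   occurrences.  The letters a', b', c' of w' following the three copies of u' then form a
   fragility of w' from which (a, b, c) is inherited through x.  An empty fragility forces
   a = al, and b, c <> al puts the factors be b and ga c inside single blocks.  The
   converse constructions are direct, and condition (3) holds because f maps the fragile
   LSP word w' to the LSP word w. *)

From mathcomp Require Import all_boot zify.
Set Implicit Arguments. Unset Strict Implicit. Unset Printing Implicit Defensive.

Section SeqFacts.
Variable T : eqType.
Implicit Types (x y z : T) (s t : seq T).

Lemma cat_cons_notin_inj x t1 t2 s1 s2 : x \notin t1 -> x \notin t2 ->
  t1 ++ x :: s1 = t2 ++ x :: s2 -> t1 = t2 /\ s1 = s2.
Proof.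
move=> xt1 xt2 E; have index_x t s : x \notin t -> index x (t ++ x :: s) = size t.
  by move=> xt; rewrite index_cat (negbTE xt) /= eqxx addn0.
have /eqseq_cat: size t1 = size t2 by rewrite -(index_x _ s1) // E index_x.
by move/(_ (x :: s1) (x :: s2)); rewrite E eqxx => /esym/andP[/eqP-> /eqP[]].
Qed.

Lemma prefix_rcons_eq s t y z : prefix (rcons s y) t -> prefix (rcons s z) t -> y = z.
Proof.
by rewrite !prefixE !size_rcons => /eqP-> /eqP/rcons_inj[].
Qed.

End SeqFacts.

Lemma increasing_bracket (p : nat -> nat) i :
  (forall n, p n < p n.+1) -> p 0 <= i -> exists n, p n <= i < p n.+1.
Proof.
move=> p_incr; elim: i => [|i IHi] p0i.
  by exists 0; rewrite p0i /=; apply: leq_ltn_trans (p_incr 0).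
have [/IHi[n /andP[lo hi]]|] := boolP (p 0 <= i).
  have [lt_i|ge_i] := ltnP i.+1 (p n.+1); first by exists n; rewrite lt_i (leq_trans lo).
  by exists n.+1; rewrite ge_i; apply: leq_ltn_trans hi (p_incr n.+1).
by rewrite -ltnNge => lt_i; exists 0; rewrite p0i; apply: leq_ltn_trans lt_i (p_incr 0).
Qed.

Section Windows.
Variable T : eqType.
Implicit Types (y : nat -> T) (s v : seq T).

(* [ipref v y] and [ifactor v y] unfold to [v = window y 0 (size v)] and
   [exists i, v = window y i (size v)]; occurrences are stated in this form throughout. *)
Definition window y i n : seq T := mkseq (fun j => y (i + j)) n.

Lemma size_window y i n : size (window y i n) = n.
Proof. exact: size_mkseq. Qed.

Lemma nth_window x0 y i n j : j < n -> nth x0 (window y i n) j = y (i + j).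
Proof. exact: nth_mkseq. Qed.

Lemma window_rcons y i n : window y i n.+1 = rcons (window y i n) (y (i + n)).
Proof. exact: mkseqS. Qed.

Lemma window_add y i m n : window y i (m + n) = window y i m ++ window y (i + m) n.
Proof.
elim: n => [|n IHn]; first by rewrite addn0 cats0.
by rewrite addnS !window_rcons IHn rcons_cat addnA.
Qed.

Lemma window_cons y i n : window y i n.+1 = y i :: window y i.+1 n.
Proof. by rewrite -[n.+1]add1n window_add /= addn0 addn1. Qed.

Lemma window0 y n : window y 0 n = mkseq y n.
Proof. by []. Qed.

Lemma window_catl y i s v : s ++ v = window y i (size (s ++ v)) -> s = window y i (size s).
Proof.
by rewrite size_cat window_add => /eqP; rewrite eqseq_cat ?size_window // => /andP[/eqP].
Qed.

Lemma window_catr y i s v : s ++ v = window y i (size (s ++ v)) ->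
  v = window y (i + size s) (size v).
Proof.
by rewrite size_cat window_add => /eqP; rewrite eqseq_cat ?size_window // => /andP[_ /eqP].
Qed.

Lemma prefix_window y i m n : m <= n -> prefix (window y i m) (window y i n).
Proof. by move/subnKC <-; rewrite window_add prefix_prefix. Qed.

Lemma infix_window y i j m n : i <= j -> j + m <= i + n ->
  infix (window y j m) (window y i n).
Proof.
move=> le_ij le_end; have -> : n = (j - i) + (m + (i + n - (j + m))) by lia.
by rewrite !window_add subnKC //; apply: infix_infix.
Qed.

Lemma window_prefix y i u v : v = window y i (size v) -> prefix u v ->
  u = window y i (size u).
Proof. by move=> Ev /prefixP[s Es]; apply: (@window_catl _ _ _ s); rewrite -Es. Qed.

End Windows.

Section InfiniteWords.
Variable A : finType.
Implicit Types (y : infword A) (v : seq A).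

Lemma ipref_window y n : ipref (window y 0 n) y.
Proof. by rewrite /ipref size_window. Qed.

Lemma ifactor_window y i n : ifactor (window y i n) y.
Proof. by exists i; rewrite size_window. Qed.

Lemma ipref_ifactor y v : ipref v y -> ifactor v y.
Proof. by exists 0. Qed.

Lemma ifactor_ialph y v x : ifactor v y -> x \in v -> ialph y x.
Proof. by case=> i -> /mapP[j _ ->]; exists (i + j). Qed.

Lemma mimage_cat (f : morph A) s t : mimage f (s ++ t) = mimage f s ++ mimage f t.
Proof. by rewrite /mimage map_cat flatten_cat. Qed.

Lemma mimage_cons (f : morph A) x s : mimage f (x :: s) = f x ++ mimage f s.
Proof. by []. Qed.

Lemma mimage1 (f : morph A) x : mimage f [:: x] = f x.
Proof. exact: cats0. Qed.

Lemma mimage_rcons (f : morph A) s x : mimage f (rcons s x) = mimage f s ++ f x.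
Proof. by rewrite -cats1 mimage_cat /mimage /= cats0. Qed.

End InfiniteWords.

Section FirstLetter.
Variables (A : finType) (f : morph A) (al : A).
Hypothesis f_first : is_first_b f al.

Lemma image_first : f al = [:: al].
Proof. by case/andP: f_first => /eqP. Qed.

Lemma image_rcons be : be != al -> exists ga, f be = rcons (f ga) be.
Proof.
case/andP: f_first => _ /forallP/(_ be)/implyP fbe /fbe/existsP[ga /eqP->].
by exists ga; rewrite cats1.
Qed.

Lemma image_shape d : exists2 t, f d = al :: t & al \notin t.
Proof.
have [n] := ubnP (size (f d)); elim: n d => // n IHn d /ltnSE size_fd.
have [->|ne] := eqVneq d al; first by exists [::]; rewrite ?image_first.
have [ga fd] := image_rcons ne.
have [|t fga al_t] := IHn ga; first by move: size_fd; rewrite fd size_rcons.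
by exists (rcons t d); rewrite ?fd ?fga // mem_rcons in_cons eq_sym negb_or ne.
Qed.

Lemma size_image_gt0 d : 0 < size (f d).
Proof. by have [t ->] := image_shape d. Qed.

Lemma last_image d : last al (f d) = d.
Proof.
have [->|ne] := eqVneq d al; first by rewrite image_first.
by have [ga ->] := image_rcons ne; rewrite last_rcons.
Qed.

Lemma image_inj : injective f.
Proof. by move=> d d' fdd'; rewrite -(last_image d) fdd' last_image. Qed.

Lemma first_of_first_b : first f = Some al.
Proof.
rewrite /first; case: pickP => [x /andP[/eqP fx _]|/(_ al)]; last by rewrite f_first.
by have [t] := image_shape x; rewrite fx => -[->].
Qed.

Lemma prefix_image_shape x d : x != [::] -> prefix x (f d) ->
  exists2 t, x = al :: t & al \notin t.
Proof.
have [t0 -> al_t0] := image_shape d; case: x => // a t _.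
rewrite prefix_cons => /andP[/eqP-> pre]; exists t => //.
by apply: contra al_t0; apply: (mem_subseq (infixW (prefixW pre))).
Qed.

Lemma mimage_cat_al s t : exists r, mimage f s ++ al :: t = al :: r.
Proof.
case: s => [|d s]; first by exists t.
have [t0 fd _] := image_shape d.
by exists (t0 ++ mimage f s ++ al :: t); rewrite /mimage /= fd -catA.
Qed.

Lemma mimage_block_inj s s' t t' : al \notin t -> al \notin t' ->
  mimage f s ++ al :: t = mimage f s' ++ al :: t' -> s = s' /\ t = t'.
Proof.
move=> al_t al_t'; elim: s s' => [|d s IHs] [|d' s']; rewrite ?mimage_cons /=.
- by case=> ->.
- have [t0 -> _] := image_shape d' => -[E].
  by move: al_t; rewrite E !mem_cat mem_head !orbT.
- have [t0 -> _] := image_shape d => -[E].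
  by move: al_t'; rewrite -E !mem_cat mem_head !orbT.
have [t0 fd al_t0] := image_shape d; have [t0' fd' al_t0'] := image_shape d'.
have [r Er] := mimage_cat_al s t; have [r' Er'] := mimage_cat_al s' t'.
rewrite -!catA Er Er' fd fd' => -[/(cat_cons_notin_inj al_t0 al_t0')[E0 Er0]].
have /IHs[-> ->] : mimage f s ++ al :: t = mimage f s' ++ al :: t' by rewrite Er Er' Er0.
by split=> //; congr (_ :: _); apply: image_inj; rewrite fd fd' E0.
Qed.

End FirstLetter.

(* Alternatives (a) and (b) of condition (4) of the transition relation. *)
Definition fresh_fragility (A : finType) (f : morph A) (X : A -> Prop)
    (a b c be ga : A) : Prop :=
  first f = Some a /\
  (exists d, X d /\ infix [:: be; b] (f d)) /\ (exists d, X d /\ infix [:: ga; c] (f d)).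

Definition inherited_fragility (A : finType) (f : morph A) (F : A * A * A * A * A -> Prop)
    (a b c be ga : A) : Prop :=
  exists a' b' c', F (a', b', c', be, ga) /\
  exists al, first f = Some al /\
  exists x : seq A, [/\ prefix (rcons x a) (f a' ++ [:: al]),
                        prefix (rcons x b) (f b' ++ [:: al]) &
                        prefix (rcons x c) (f c' ++ [:: al])].

Section Desubstitution.
Variables (A : finType) (f : morph A) (al : A).
Hypothesis f_first : is_first_b f al.
Variables w w' : infword A.
Hypothesis w_image : iimage f w' w.

Definition block_start n := size (mimage f (mkseq w' n)).

Lemma block_start_add k n :
  block_start (k + n) = block_start k + size (mimage f (window w' k n)).
Proof. by rewrite /block_start -window0 window_add mimage_cat size_cat. Qed.

Lemma block_start_S n : block_start n.+1 = block_start n + size (f (w' n)).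
Proof. by rewrite /block_start mkseqS mimage_rcons size_cat. Qed.

Lemma block_start_lt n : block_start n < block_start n.+1.
Proof.
by rewrite block_start_S -{1}[block_start n]addn0 ltn_add2l (size_image_gt0 f_first).
Qed.

Lemma image_window k n :
  mimage f (window w' k n) = window w (block_start k) (size (mimage f (window w' k n))).
Proof.
have := w_image (k + n); rewrite /ipref -window0 window_add mimage_cat.
exact: (@window_catr _ w 0).
Qed.

Lemma image_al_window k v : v = window w' k (size v) ->
  mimage f v ++ [:: al] = window w (block_start k) (size (mimage f v ++ [:: al])).
Proof.
move=> Ev; have := image_window k (size v).+1.
rewrite window_rcons -Ev mimage_rcons.
have [t -> _] := image_shape f_first (w' (k + size v)).
by rewrite -cat1s catA => /window_catl.
Qed.

Lemma block_window_al n :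
  f (w' n) ++ [:: al] = window w (block_start n) (size (f (w' n) ++ [:: al])).
Proof.
by rewrite -(mimage1 f (w' n)); apply: image_al_window; rewrite /= window_cons.
Qed.

Lemma block_window n : f (w' n) = window w (block_start n) (size (f (w' n))).
Proof. exact: window_catl (block_window_al n). Qed.

Lemma letter_in_block n j : j < size (f (w' n)) ->
  w (block_start n + j) = nth al (f (w' n)) j.
Proof. by move=> lt_j; rewrite [in RHS]block_window nth_window. Qed.

Lemma letter_block_start n : w (block_start n) = al.
Proof.
have [t fd _] := image_shape f_first (w' n).
by rewrite -[block_start n]addn0 letter_in_block fd.
Qed.

Lemma letter_before_block_start n : w (block_start n.+1).-1 = w' n.
Proof.
have gt0 := size_image_gt0 f_first (w' n).
rewrite block_start_S -(prednK gt0) addnS /= letter_in_block ?prednK ?ltn_predL //.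
by rewrite nth_last last_image.
Qed.

Lemma block_of i : exists n, block_start n <= i < block_start n.+1.
Proof. exact: increasing_bracket block_start_lt (leq0n i). Qed.

Lemma block_start_of_al i : w i = al -> exists n, i = block_start n.
Proof.
move=> wi; have [n /andP[lo hi]] := block_of i; exists n.
move: wi hi; rewrite -(subnKC lo) block_start_S ltn_add2l.
have [t fd al_t] := image_shape f_first (w' n).
case: (i - block_start n) => [|j] wj lt_j; first by rewrite addn0.
move: wj; rewrite letter_in_block // fd /= => al_tj; case/negP: al_t.
by rewrite -al_tj mem_nth // -ltnS -[(size t).+1]/(size (al :: t)) -fd.
Qed.

Lemma infix_block n i v : block_start n <= i -> i + size v <= block_start n.+1 ->
  v = window w i (size v) -> infix v (f (w' n)).
Proof.
move=> lo hi ->; rewrite block_window; apply: infix_window => //.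
by rewrite -block_start_S.
Qed.

Lemma factor_of_block n v : infix v (f (w' n)) -> ifactor v w.
Proof.
case/infixP=> s1 [s2 fd]; have := block_window n.
by rewrite fd catA => /window_catl/window_catr; exists (block_start n + size s1).
Qed.

Lemma ialph_image a : ialph w a <-> exists d, ialph w' d /\ a \in f d.
Proof.
split=> [[i <-]|[_ [[n <-] a_fd]]].
  have [n /andP[lo hi]] := block_of i; exists (w' n); split; first by exists n.
  rewrite -infix1s; apply: (infix_block lo _ (_ : [:: w i] = window w i 1)).
    by rewrite addn1.
  by rewrite window_cons.
apply: (ifactor_ialph (v := [:: a])) (mem_head _ _).
by apply: (@factor_of_block n); rewrite infix1s.
Qed.

Lemma ipref_image v z x : ipref (rcons v z) w' -> prefix x (f z ++ [:: al]) ->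
  ipref (mimage f v ++ x) w.
Proof.
move=> pre_v pre_x; have := image_al_window (k := 0) pre_v.
rewrite mimage_rcons -catA => /window_prefix; apply.
by rewrite prefix_catr // eqxx.
Qed.

Lemma ifactor_image be v z x : ifactor (be :: rcons v z) w' -> prefix x (f z ++ [:: al]) ->
  ifactor (be :: mimage f v ++ x) w.
Proof.
case=> i; rewrite /= -/(window w' i _) window_cons => -[-> Ev] pre_x.
have := image_al_window Ev; rewrite mimage_rcons -catA => /window_prefix Ex.
have pos_gt0 : 0 < block_start i.+1 by apply: leq_ltn_trans (block_start_lt i).
exists (block_start i.+1).-1; rewrite /= -/(window w _ _) window_cons prednK //.
by rewrite letter_before_block_start -Ex // prefix_catr // eqxx.
Qed.

Lemma pair_in_block i be b : [:: be; b] = window w i 2 -> b != al ->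
  exists d, ialph w' d /\ infix [:: be; b] (f d).
Proof.
move=> Ei b_al; have wb : w i.+1 = b by move: (Ei); rewrite !window_cons => -[].
have [n /andP[lo hi]] := block_of i; exists (w' n); split; first by exists n.
apply: infix_block lo _ Ei; rewrite /= addn2 ltn_neqAle hi andbT.
by apply: contraNneq b_al => E; rewrite -wb E letter_block_start.
Qed.

Lemma cons_al_window i be v : be :: al :: v = window w i (size v).+2 ->
  exists k, be = w' k /\ al :: v = window w (block_start k.+1) (size v).+1.
Proof.
rewrite !window_cons => -[Ebe wi1 Ev].
have [[|k] Ek] := block_start_of_al (esym wi1); first by [].
exists k; rewrite window_cons -Ek -wi1 -Ev Ebe; split=> //.
by rewrite -[i]/(i.+1.-1) Ek letter_before_block_start.
Qed.

Lemma desubstitute k u e : u != [::] ->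
  rcons u e = window w (block_start k) (size (rcons u e)) ->
  exists N t, [/\ u = mimage f (window w' k N) ++ al :: t, al \notin t &
                  prefix (rcons (al :: t) e) (f (w' (k + N)) ++ [:: al])].
Proof.
move=> u_ne Eu; set m := size u; have m_gt0 : 0 < m by rewrite lt0n size_eq0.
have incr n : block_start (k + n) < block_start (k + n.+1).
  by rewrite addnS block_start_lt.
have [|N /andP[lo hi]] :=
  increasing_bracket incr (_ : block_start (k + 0) <= block_start k + m.-1).
  by rewrite addn0 leq_addr.
set r := size (mimage f (window w' k N)).
have bsN : block_start (k + N) = block_start k + r := block_start_add k N.
have lt_rm : r < m by move: lo; rewrite bsN leq_add2l; lia.
have le_block : m - r <= size (f (w' (k + N))).
  by move: hi; rewrite addnS block_start_S bsN -addnA ltn_add2l; lia.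
move: Eu; rewrite size_rcons -/m -(subnKC (ltnW lt_rm)) -addnS window_add window_rcons.
rewrite -(image_window k N) -bsN -rcons_cat => /rcons_inj[Eu ->].
set x := window w (block_start (k + N)) (m - r).
have x_ne : x != [::] by rewrite -size_eq0 size_window subn_eq0 -ltnNge.
have pre_x : prefix x (f (w' (k + N))) by rewrite block_window; apply: prefix_window.
have [t Ex al_t] := prefix_image_shape f_first x_ne pre_x.
exists N, t; split; rewrite -?Ex // -window_rcons (block_window_al (k + N)).
by apply: prefix_window; rewrite size_cat addn1 ltnS.
Qed.

Lemma desubstitution_shift k N t u b : u = mimage f (window w' 0 N) ++ al :: t ->
  al \notin t -> rcons u b = window w (block_start k) (size (rcons u b)) ->
  window w' k N = window w' 0 N /\ prefix (rcons (al :: t) b) (f (w' (k + N)) ++ [:: al]).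
Proof.
move=> Eu al_t /desubstitute[|N' [t' [Eu' al_t' pre]]].
  by rewrite Eu -size_eq0 size_cat addnS.
have [Es Et] := mimage_block_inj f_first al_t al_t' (etrans (esym Eu) Eu').
have EN : N' = N by rewrite -(size_window w' k N') -Es size_window.
by subst t' N'; rewrite Es.
Qed.

Lemma shifted_occurrence N t be b : al \notin t ->
  ifactor (be :: rcons (mimage f (window w' 0 N) ++ al :: t) b) w ->
  exists k, [/\ be = w' k, window w' k.+1 N = window w' 0 N &
                prefix (rcons (al :: t) b) (f (w' (k.+1 + N)) ++ [:: al])].
Proof.
move=> al_t [i]; have [r Er] := mimage_cat_al f_first (window w' 0 N) t.
rewrite Er => /cons_al_window[k [-> Ek]]; exists k.
by have [] := desubstitution_shift (esym Er) al_t Ek.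
Qed.

Lemma fragility_preimage a b c be ga u : fragility a b c be ga u w ->
  fresh_fragility f (ialph w') a b c be ga \/ inherited_fragility f (Fset w') a b c be ga.
Proof.
case=> [[ab ac bc bega] [pre_a fac_b fac_c]].
case: u pre_a fac_b fac_c => [|u0 u] pre_a fac_b fac_c.
  have Ea : a = al by move: pre_a => /= [->]; apply: (letter_block_start 0).
  have [[i Eb] [j Ec]] := (fac_b, fac_c).
  left; split; first by rewrite Ea (first_of_first_b f_first).
  split; [apply: (pair_in_block Eb) | apply: (pair_in_block Ec)]; apply/eqP => E;
    [apply: ab | apply: ac]; by rewrite Ea E.
have [N [t [Eu al_t pre_a']]] := desubstitute (k := 0) (u := u0 :: u) isT pre_a.
rewrite Eu in fac_b fac_c; rewrite add0n in pre_a'.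
have [k [Ebe Ek pre_b']] := shifted_occurrence al_t fac_b.
have [l [Ega El pre_c']] := shifted_occurrence al_t fac_c.
subst be ga.
have neq x y d d' : x <> y -> prefix (rcons (al :: t) x) (f d ++ [:: al]) ->
    prefix (rcons (al :: t) y) (f d' ++ [:: al]) -> d <> d'.
  by move=> xy px py dd'; apply: xy; apply: prefix_rcons_eq px _; rewrite dd'.
right; exists (w' N), (w' (k.+1 + N)), (w' (l.+1 + N)); split.
  exists (window w' 0 N); split.
    by split; [apply: neq ab pre_a' pre_b' | apply: neq ac pre_a' pre_c' |
               apply: neq bc pre_b' pre_c' |].
  split; [rewrite -[w' N]/(w' (0 + N)) | rewrite -Ek | rewrite -El]; rewrite -window_rcons;
    [exact: ipref_window | rewrite -window_cons; exact: ifactor_window ..].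
by exists al; split; [exact: first_of_first_b f_first | exists (al :: t)].
Qed.

Lemma fragility_image a b c be ga : [/\ a <> b, a <> c, b <> c & be <> ga] ->
  fresh_fragility f (ialph w') a b c be ga \/ inherited_fragility f (Fset w') a b c be ga ->
  Fset w (a, b, c, be, ga).
Proof.
move=> neq [[fa [[_ [[n <-] inf_b]] [_ [[n' <-] inf_c]]]]|].
  have Ea : a = al by move: fa; rewrite (first_of_first_b f_first) => -[].
  exists [::]; split=> //; split;
    [|exact: (factor_of_block inf_b) | exact: (factor_of_block inf_c)].
  by rewrite /ipref /= Ea; congr [:: _]; apply: esym (letter_block_start 0).
move=> [a' [b' [c' [[u' [_ [pre_a fac_b fac_c]]] [al' [fal [x [pa pb pc]]]]]]]].
move: fal pa pb pc; rewrite (first_of_first_b f_first) => -[<-] pa pb pc.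
exists (mimage f u' ++ x); split=> //; rewrite !rcons_cat; split.
- exact: ipref_image pre_a pa.
- exact: ifactor_image fac_b pb.
- exact: ifactor_image fac_c pc.
Qed.

End Desubstitution.

Lemma fragility_ialph (A : finType) (a b c be ga : A) u y : fragility a b c be ga u y ->
  [/\ ialph y a, ialph y b, ialph y c, ialph y be & ialph y ga].
Proof.
case=> _ [/ipref_ifactor pre_a fac_b fac_c].
by split; [apply: ifactor_ialph pre_a _ | apply: ifactor_ialph fac_b _ |
           apply: ifactor_ialph fac_c _ | apply: ifactor_ialph fac_b _ |
           apply: ifactor_ialph fac_c _]; rewrite ?(in_cons, mem_rcons, eqxx, orbT).
Qed.

Theorem lemma5 (A : finType) (w w' : infword A) (f : morph A) :
  LSP w -> LSP w' -> is_bLSP f -> iimage f w' w ->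
  forall (g : morph A) (w'' : infword A),
    is_bLSP g -> iimage g w'' w' ->
    transition (State (ialph w) f (Fset w)) f (State (ialph w') g (Fset w')).
Proof.
move=> LSP_w LSP_w' [al f_first] w_image g w'' g_bLSP _.
split=> //; first by exists al.
split=> //= [a|a b c be ga [u frag] breaking|a b c be ga].
- exact: (ialph_image f_first w_image a).
- apply: (breaking w' w) LSP_w' w_image LSP_w.
  by exists be, ga, u; case: (frag) => -[].
split=> [[u frag]|[_ neq frag]].
  split; [exact: fragility_ialph frag | by case: frag => -[] |].
  exact (fragility_preimage f_first w_image frag).
exact (fragility_image f_first w_image neq frag).
Qed.
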